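(* Let $p\ge2$ and let $m_1,m_2$ be positive integers with $m_1\not\equiv m_2\pmod p$. Then for no width $d\ge1$ and no $W\in\mathbb{R}^{d\times p}$, $V\in\mathbb{R}^{p\times d}$ does the ReLU network $s^\theta(x)=V\,\mathrm{ReLU}(Wx)$ satisfy $h_\theta(x)=y(x)$ for all $x\in\mathcal{X}_{m_1}\cup\mathcal{X}_{m_2}$.
   Context: Let $[p]=\{0,1,\dots,p-1\}$ and, for an integer $m\ge1$, $\mathcal{X}_m=\{x\in\{0,1,\dots,m\}^p:\ \|x\|_1=m\}$, with coordinates of $x$ indexed by $[p]$. The label of $x$ is $y(x)=(\sum_{r\in[p]} r\,x_r)\bmod p\in[p]$. $\mathrm{ReLU}(t)=\max\{0,t\}$ is applied entrywise. For a score vector $s^\theta(x)\in\mathbb{R}^p$ with coordinates indexed by $[p]$, the predictor is $h_\theta(x)=\ell$ if $s^\theta_\ell(x)>s^\theta_k(x)$ for all $k\ne\ell$, and $h_\theta(x)=\bot$ (invalid, never equal to a label) otherwise. *)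

From HB Require Import structures.
From mathcomp Require Import all_boot all_order all_algebra.
From mathcomp Require Import reals.
Set Implicit Arguments. Unset Strict Implicit. Unset Printing Implicit Defensive.
Import Order.TTheory GRing.Theory Num.Theory.
Local Open Scope ring_scope.

(* x \in X_m  <=>  ||x||_1 = m  (coordinates are then automatically <= m). *)
Definition inX (p m : nat) (x : {ffun 'I_p -> nat}) : bool :=
  (\sum_(r < p) x r)%N == m.

Definition label (p : nat) (x : {ffun 'I_p -> nat}) : nat :=
  ((\sum_(r < p) r * x r) %% p)%N.

Definition relu (R : realType) (t : R) : R := Num.max 0 t.

Definition score (R : realType) (p d : nat) (W : 'M[R]_(d, p)) (V : 'M[R]_(p, d))
  (x : {ffun 'I_p -> nat}) : 'cV[R]_p :=
  V *m map_mx (@relu R) (W *m \col_(r < p) ((x r)%:R : R)).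

(* h_theta(x) = Some l if s_l > s_k for all k <> l, None (= invalid) otherwise *)
Definition predict (R : realType) (p : nat) (s : 'cV[R]_p) : option 'I_p :=
  [pick l : 'I_p | [forall k : 'I_p, (k != l) ==> (s k 0 < s l 0)]].

(* A bias-free ReLU network is positively homogeneous, s(c x) = c s(x) for
   c >= 0, and the predicted class is invariant under positive rescaling of
   the scores.  The inputs m1 e_1 and m2 e_1 therefore receive the same
   prediction, yet their labels are m1 mod p and m2 mod p. *)

From HB Require Import structures.
From mathcomp Require Import all_boot all_order all_algebra.
From mathcomp Require Import reals.
Set Implicit Arguments. Unset Strict Implicit. Unset Printing Implicit Defensive.
Import Order.TTheory GRing.Theory Num.Theory.
Local Open Scope ring_scope.

Definition scale_input (p m : nat) (x : {ffun 'I_p -> nat}) : {ffun 'I_p -> nat} :=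
  [ffun r => (m * x r)%N].

Definition onehot (p : nat) (i : 'I_p) : {ffun 'I_p -> nat} :=
  [ffun r => (r == i : nat)].

Section Homogeneity.

Variables (R : realType) (p : nat).

Lemma relu_pmul (c t : R) : 0 <= c -> relu (c * t) = c * relu t.
Proof.
move=> c_ge0; rewrite /relu; case: (leP 0 t) => [t_ge0|t_lt0].
- by rewrite !max_r // mulr_ge0.
- by rewrite !max_l ?mulr0 // mulr_ge0_le0 // ltW.
Qed.

Lemma score_scale_input (d m : nat) (W : 'M[R]_(d, p)) (V : 'M[R]_(p, d))
    (x : {ffun 'I_p -> nat}) :
  score W V (scale_input m x) = m%:R *: score W V x.
Proof.
rewrite /score scalemxAr; congr (V *m _).
have -> : \col_(r < p) ((scale_input m x r)%:R : R) = m%:R *: \col_(r < p) (x r)%:R.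
  by apply/matrixP => i j; rewrite !mxE ffunE natrM.
by rewrite -scalemxAr; apply/matrixP => i j; rewrite !mxE relu_pmul.
Qed.

Lemma predict_pscale (s : 'cV[R]_p) (c : R) : 0 < c -> predict (c *: s) = predict s.
Proof.
move=> c_gt0; apply: eq_pick => l /=; apply: eq_forallb => k.
by rewrite !mxE ltr_pM2l.
Qed.

Lemma predict_score_scale_input (d m : nat) (W : 'M[R]_(d, p)) (V : 'M[R]_(p, d))
    (x : {ffun 'I_p -> nat}) :
  (0 < m)%N -> predict (score W V (scale_input m x)) = predict (score W V x).
Proof. by move=> m_gt0; rewrite score_scale_input predict_pscale ?ltr0n. Qed.

End Homogeneity.

Lemma sum_scale_onehot (p m : nat) (i : 'I_p) (F : 'I_p -> nat) :
  (\sum_(r < p) F r * scale_input m (onehot i) r)%N = (F i * m)%N.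
Proof.
rewrite (bigD1 i) //= !ffunE eqxx muln1 big1 ?addn0 // => r /negbTE r_neq_i.
by rewrite !ffunE r_neq_i !muln0.
Qed.

Lemma inX_scale_onehot (p m : nat) (i : 'I_p) : inX m (scale_input m (onehot i)).
Proof.
by rewrite /inX (eq_bigr _ (fun r _ => esym (mul1n _))) sum_scale_onehot mul1n.
Qed.

Lemma label_scale_onehot (p m : nat) (i : 'I_p) :
  label (scale_input m (onehot i)) = ((i * m) %% p)%N.
Proof. by rewrite /label sum_scale_onehot. Qed.

Theorem mainTheorem4 (R : realType) (p m1 m2 : nat) :
  (2 <= p)%N -> (0 < m1)%N -> (0 < m2)%N -> (m1 %% p != m2 %% p)%N ->
  ~ (exists (d : nat) (W : 'M[R]_(d, p)) (V : 'M[R]_(p, d)),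
       (1 <= d)%N /\
       forall x : {ffun 'I_p -> nat}, inX m1 x || inX m2 x ->
         omap val (predict (score W V x)) = Some (label x)).
Proof.
move=> p_ge2 m1_gt0 m2_gt0 m12_neq [d [W [V [_ fits]]]].
pose e1 := onehot (Ordinal p_ge2).
have predict_e1 m : (0 < m)%N -> inX m1 (scale_input m e1) || inX m2 (scale_input m e1) ->
    omap val (predict (score W V e1)) = Some (m %% p)%N.
  move=> m_gt0 fits_m; rewrite -(predict_score_scale_input W V e1 m_gt0).
  by rewrite fits // label_scale_onehot mul1n.
have fits1 : inX m1 (scale_input m1 e1) || inX m2 (scale_input m1 e1).
  by rewrite inX_scale_onehot.
have fits2 : inX m1 (scale_input m2 e1) || inX m2 (scale_input m2 e1).
  by rewrite inX_scale_onehot orbT.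
move: (predict_e1 _ m2_gt0 fits2); rewrite (predict_e1 _ m1_gt0 fits1) => -[m12_eq].
by rewrite m12_eq eqxx in m12_neq.
Qed.
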